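(* Let $A$ be an infinite Boolean algebra and $K$ an infinite compact Hausdorff space. Then $irr(A)\leq nbiort_2(K_A)$ and $nbiort_2(K)\leq s(K^2)$.
   Context: $K_A$ is the Stone space of $A$ (ultrafilters of $A$ with topology generated by $[a]=\{u:a\in u\}$). $irr(A)$ is the supremum of cardinalities of sets $R\subseteq A$ such that no $r\in R$ belongs to the Boolean subalgebra generated by $R\setminus\{r\}$. A nice biorthogonal system in $C(K)$ is a family $(f_\alpha,\delta_{x_\alpha}-\delta_{y_\alpha})_{\alpha<\kappa}$ with $f_\alpha\in C(K)$, $x_\alpha,y_\alpha\in K$, $f_\alpha(x_\alpha)-f_\alpha(y_\alpha)=1$ and $f_\alpha(x_\beta)-f_\alpha(y_\beta)=0$ for $\alpha\ne\beta$; $nbiort_2(K)$ is the supremum of $\kappa$ over nice biorthogonal systems in $C(K)$. $s(Z)$ is the supremum of cardinalities of discrete subspaces of $Z$; $K^2$ has the product topology. *)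

From Stdlib Require Import Reals List.
Open Scope R_scope.

Record BoolAlg := {
  ba_car :> Type;
  ba_join : ba_car -> ba_car -> ba_car;
  ba_meet : ba_car -> ba_car -> ba_car;
  ba_compl : ba_car -> ba_car;
  ba_zero : ba_car;
  ba_one : ba_car;
  ba_join_assoc : forall a b c, ba_join a (ba_join b c) = ba_join (ba_join a b) c;
  ba_meet_assoc : forall a b c, ba_meet a (ba_meet b c) = ba_meet (ba_meet a b) c;
  ba_join_comm : forall a b, ba_join a b = ba_join b a;
  ba_meet_comm : forall a b, ba_meet a b = ba_meet b a;
  ba_absorb1 : forall a b, ba_join a (ba_meet a b) = a;
  ba_absorb2 : forall a b, ba_meet a (ba_join a b) = a;
  ba_distr : forall a b c, ba_meet a (ba_join b c) = ba_join (ba_meet a b) (ba_meet a c);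
  ba_join0 : forall a, ba_join a ba_zero = a;
  ba_meet1 : forall a, ba_meet a ba_one = a;
  ba_complJ : forall a, ba_join a (ba_compl a) = ba_one;
  ba_complM : forall a, ba_meet a (ba_compl a) = ba_zero
}.

Inductive gen_sub (A : BoolAlg) (S : A -> Prop) : A -> Prop :=
  | gen_in : forall a, S a -> gen_sub A S a
  | gen_zero : gen_sub A S (ba_zero A)
  | gen_one : gen_sub A S (ba_one A)
  | gen_join : forall a b, gen_sub A S a -> gen_sub A S b -> gen_sub A S (ba_join A a b)
  | gen_meet : forall a b, gen_sub A S a -> gen_sub A S b -> gen_sub A S (ba_meet A a b)
  | gen_compl : forall a, gen_sub A S a -> gen_sub A S (ba_compl A a).

Definition irredundant (A : BoolAlg) (R : A -> Prop) : Prop :=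
  forall r, R r -> ~ gen_sub A (fun a => R a /\ a <> r) r.

Definition ba_le (A : BoolAlg) (a b : A) : Prop := ba_meet A a b = a.

Definition ultrafilter (A : BoolAlg) (u : A -> Prop) : Prop :=
  u (ba_one A) /\ ~ u (ba_zero A) /\
  (forall a b, u a -> ba_le A a b -> u b) /\
  (forall a b, u a -> u b -> u (ba_meet A a b)) /\
  (forall a, u a \/ u (ba_compl A a)).

Definition Stone (A : BoolAlg) : Type := { u : A -> Prop | ultrafilter A u }.

(* Open sets of K_A: unions of basic clopens [a] = {u | a in u}. *)
Definition stone_open (A : BoolAlg) (O : Stone A -> Prop) : Prop :=
  forall u, O u -> exists a, proj1_sig u a /\
    forall v : Stone A, proj1_sig v a -> O v.

Section Top.
Context {T : Type} (is_open : (T -> Prop) -> Prop).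

Definition is_topology : Prop :=
  is_open (fun _ => True) /\
  (forall F : (T -> Prop) -> Prop, (forall U, F U -> is_open U) ->
      is_open (fun x => exists U, F U /\ U x)) /\
  (forall U V, is_open U -> is_open V -> is_open (fun x => U x /\ V x)).

Definition top_compact : Prop :=
  forall F : (T -> Prop) -> Prop,
    (forall U, F U -> is_open U) -> (forall x, exists U, F U /\ U x) ->
    exists l : list (T -> Prop), Forall F l /\ forall x, exists U, In U l /\ U x.

Definition top_hausdorff : Prop :=
  forall x y : T, x <> y -> exists U V, is_open U /\ is_open V /\ U x /\ V y /\
    forall z, ~ (U z /\ V z).

Definition top_continuous (f : T -> R) : Prop :=
  forall x eps, 0 < eps -> exists U, is_open U /\ U x /\
    forall y, U y -> Rabs (f y - f x) < eps.

(* A nice biorthogonal system (f_i, delta_{x_i} - delta_{y_i}) indexed by I. *)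
Definition nice_biorth (I : Type) (f : I -> T -> R) (x y : I -> T) : Prop :=
  (forall i, top_continuous (f i)) /\
  (forall i, f i (x i) - f i (y i) = 1) /\
  (forall i j, i <> j -> f i (x j) - f i (y j) = 0).

Definition nbiort2_size (I : Type) : Prop :=
  exists f x y, nice_biorth I f x y.

Definition discrete_sq (D : T * T -> Prop) : Prop :=
  forall p, D p -> exists U V, is_open U /\ is_open V /\ U (fst p) /\ V (snd p) /\
    forall q, D q -> U (fst q) -> V (snd q) -> q = p.

Definition s_sq_size (I : Type) : Prop :=
  exists e : I -> T * T, (forall i j, e i = e j -> i = j) /\
    discrete_sq (fun p => exists i, e i = p).
End Top.

Definition irr_size (A : BoolAlg) (I : Type) : Prop :=
  exists e : I -> A, (forall i j, e i = e j -> i = j) /\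
    irredundant A (fun a => exists i, e i = a).

Definition card_le (X Y : Type) : Prop :=
  exists g : X -> Y, forall a b, g a = g b -> a = b.
Definition card_lt (X Y : Type) : Prop := card_le X Y /\ ~ card_le Y X.

(* sup{|X| : P X} <= sup{|Y| : Q Y}, i.e. every |X| with P X is
   <= sup{|Y| : Q Y}, i.e. every cardinal below such |X| is below some such |Y|. *)
Definition sup_le (P Q : Type -> Prop) : Prop :=
  forall X, P X -> forall Z : Type, card_lt Z X -> exists Y, Q Y /\ card_lt Z Y.

Definition infinite_type (T : Type) : Prop :=
  ~ exists l : list T, forall x, In x l.

(* Both inequalities come from direct transfers of witnesses, which make the
   cardinal comparisons immediate ([sup_le_of_transfer]).

   - Irredundant set -> nice biorthogonal system on K_A.  If R is irredundant
     and r in R, then r lies outside the subalgebra B generated by R \ {r}.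
     A pair of ultrafilters x, y with r in x, r notin y that agree on B
     ([separate_from_subalgebra], built with the ultrafilter extension
     theorem, itself a consequence of Zorn's lemma) gives the functional
     delta_x - delta_y, and the indicator function of the clopen set [r] is the
     matching continuous function.
   - Nice biorthogonal system -> discrete subset of K^2.  The points
     (x_i, y_i) are pairwise distinct and, by continuity of f_i, the product
     of the neighbourhoods where f_i is within 1/2 of f_i(x_i), resp. f_i(y_i),
     isolates (x_i, y_i) among them.
   Neither transfer needs infiniteness, compactness or the Hausdorff property. *)
From Stdlib Require Import Reals List.
From Stdlib Require Import Classical ClassicalEpsilon FunctionalExtensionality
  PropExtensionality Lra.
From mathcomp Require classical_sets.

Lemma sup_le_of_transfer (P Q : Type -> Prop) :
  (forall X, P X -> Q X) -> sup_le P Q.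
Proof. intros PQ X PX Z ZX. exists X. split; [apply PQ|]; assumption. Qed.

Lemma zorn_subsets (T : Type) (P : (T -> Prop) -> Prop) :
  (forall F : (T -> Prop) -> Prop, (forall X, F X -> P X) ->
     (forall X Y, F X -> F Y -> (forall t, X t -> Y t) \/ (forall t, Y t -> X t)) ->
     P (fun t => exists X, F X /\ X t)) ->
  exists M, P M /\
    forall N, (forall t, M t -> N t) -> P N -> forall t, N t -> M t.
Proof.
  intro Hchain.
  destruct (@classical_sets.Zorn_bigcup T P) as [M [PM Mmax]].
  - intros F FP Ftot.
    replace (classical_sets.bigcup F (fun X => X)) with (fun t => exists X, F X /\ X t).
    + apply Hchain; [exact FP | exact Ftot].
    + apply functional_extensionality; intro t; apply propositional_extensionality.
      split; [intros [X [FX Xt]]; exists X | intros [X FX Xt]; exists X; split]; assumption.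
  - exists M; split; [exact PM|].
    intros N MN PN. apply NNPP; intro NM. exact (Mmax N (conj MN NM) PN).
Qed.

Section BooleanAlgebra.
Variable A : BoolAlg.
Local Notation "a * b" := (ba_meet A a b).
Local Notation "a + b" := (ba_join A a b).
Local Notation "a ^c" := (ba_compl A a) (at level 2).
Local Notation "0" := (ba_zero A).
Local Notation "1" := (ba_one A).
Local Notation "a <= b" := (ba_le A a b).

Lemma meet_idem a : a * a = a.
Proof. rewrite <- (ba_absorb1 A a a) at 2. apply ba_absorb2. Qed.

Lemma meet0 a : a * 0 = 0.
Proof. rewrite <- (ba_complM A a), ba_meet_assoc, meet_idem. reflexivity. Qed.

Lemma meet0l a : 0 * a = 0.
Proof. rewrite ba_meet_comm; apply meet0. Qed.

Lemma meet1l a : 1 * a = a.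
Proof. rewrite ba_meet_comm; apply ba_meet1. Qed.

Lemma join0l a : 0 + a = a.
Proof. rewrite ba_join_comm; apply ba_join0. Qed.

Lemma join1 a : a + 1 = 1.
Proof.
  transitivity (1 * (1 + a)); [rewrite meet1l, ba_join_comm; reflexivity|].
  apply ba_absorb2.
Qed.

Lemma distr_r a b c : (b + c) * a = b * a + c * a.
Proof.
  rewrite ba_meet_comm, ba_distr, (ba_meet_comm A a b), (ba_meet_comm A a c).
  reflexivity.
Qed.

Lemma join_distr a b c : a + b * c = (a + b) * (a + c).
Proof.
  rewrite ba_distr, (ba_meet_comm A (a + b) a), ba_absorb2, distr_r.
  rewrite ba_join_assoc, ba_absorb1. reflexivity.
Qed.

Lemma compl_unique a b : a * b = 0 -> a + b = 1 -> b = a^c.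
Proof.
  intros Hmeet Hjoin. transitivity (b * a^c).
  - rewrite <- (ba_meet1 A b) at 1.
    rewrite <- (ba_complJ A a), ba_distr, ba_meet_comm, Hmeet, join0l. reflexivity.
  - rewrite <- (ba_meet1 A (a^c)) at 2.
    rewrite <- Hjoin, ba_distr, (ba_meet_comm A (a^c) a), ba_complM, join0l, ba_meet_comm.
    reflexivity.
Qed.

Lemma compl0 : 0^c = 1.
Proof. symmetry. apply compl_unique; [apply meet0l | apply join0l]. Qed.

Lemma de_morgan b c : (b + c)^c = b^c * c^c.
Proof.
  symmetry. apply compl_unique.
  - rewrite distr_r, ba_meet_assoc, ba_complM, meet0l.
    rewrite (ba_meet_comm A (b^c) (c^c)), ba_meet_assoc, ba_complM, meet0l, ba_join0.
    reflexivity.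
  - rewrite join_distr, (ba_join_comm A b c) at 1.
    rewrite <- (ba_join_assoc A c b), ba_complJ, join1.
    rewrite <- (ba_join_assoc A b c), ba_complJ, join1, ba_meet1. reflexivity.
Qed.

Lemma meet_zero_split a x y : x * a = 0 -> y * a^c = 0 -> x * y = 0.
Proof.
  intros Hx Hy.
  rewrite <- (ba_meet1 A (x * y)), <- (ba_complJ A a), ba_distr.
  rewrite (ba_meet_comm A x y) at 1.
  rewrite <- ba_meet_assoc, Hx, meet0, <- ba_meet_assoc, Hy, meet0, ba_join0.
  reflexivity.
Qed.

Lemma le_trans a b c : a <= b -> b <= c -> a <= c.
Proof.
  unfold ba_le. intros Hab Hbc. rewrite <- Hab, <- ba_meet_assoc, Hbc. reflexivity.
Qed.

Lemma le_antisym a b : a <= b -> b <= a -> a = b.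
Proof. unfold ba_le. intros Hab Hba. rewrite <- Hab, ba_meet_comm. exact Hba. Qed.

Lemma meet_le_l a b : a * b <= a.
Proof.
  unfold ba_le. rewrite <- ba_meet_assoc, (ba_meet_comm A b a), ba_meet_assoc, meet_idem.
  reflexivity.
Qed.

Lemma meet_le_r a b : a * b <= b.
Proof. unfold ba_le. rewrite <- ba_meet_assoc, meet_idem. reflexivity. Qed.

Lemma le_meet a b c : a <= b -> a <= c -> a <= b * c.
Proof.
  unfold ba_le. intros Hab Hac. rewrite ba_meet_assoc, Hab, Hac. reflexivity.
Qed.

Lemma le_join a b c : a <= c -> b <= c -> a + b <= c.
Proof. unfold ba_le. intros Hac Hbc. rewrite distr_r, Hac, Hbc. reflexivity. Qed.

Lemma le0 a : a <= 0 -> a = 0.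
Proof. unfold ba_le. intro H. rewrite <- H. apply meet0. Qed.

Lemma le_of_meet_compl a b : a * b^c = 0 -> a <= b.
Proof.
  unfold ba_le. intro H.
  rewrite <- (ba_meet1 A a) at 2. rewrite <- (ba_complJ A b), ba_distr, H, ba_join0.
  reflexivity.
Qed.

Lemma ultrafilter_not_compl u a : ultrafilter A u -> u a -> ~ u (a^c).
Proof.
  intros [_ [Hu0 [_ [Humeet _]]]] Ha Hac. apply Hu0.
  rewrite <- (ba_complM A a). auto.
Qed.

Definition meetl (l : list A) : A := fold_right (ba_meet A) 1 l.

Definition FIP (S : A -> Prop) : Prop := forall l, Forall S l -> meetl l <> 0.

Lemma meetl_app l1 l2 : meetl (l1 ++ l2) = meetl l1 * meetl l2.
Proof.
  induction l1 as [|a l1 IH]; simpl; [rewrite meet1l; reflexivity|].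
  rewrite IH, ba_meet_assoc. reflexivity.
Qed.

Lemma FIP_sub (S S' : A -> Prop) : (forall a, S' a -> S a) -> FIP S -> FIP S'.
Proof. intros HS' HS l Hl. apply HS. eapply Forall_impl; eassumption. Qed.

Lemma meetl_lower_bound (c : A) (D : A -> Prop) l :
  D 1 -> (forall a b, D a -> D b -> D (a * b)) ->
  Forall (fun a => a = c \/ D a) l -> exists d, D d /\ c * d <= meetl l.
Proof.
  intros D1 Dmeet Hl. induction Hl as [|a l Ha _ [d [Dd Hd]]].
  - exists 1. split; [exact D1 | apply meet_le_r].
  - destruct Ha as [-> | Da].
    + exists d. split; [exact Dd|]. apply le_meet; [apply meet_le_l | exact Hd].
    + exists (d * a). split; [auto|]. simpl. rewrite ba_meet_assoc.
      apply le_meet; [apply meet_le_r|]. eapply le_trans; [apply meet_le_l | exact Hd].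
Qed.

Lemma chain_list_bound (S : A -> Prop) (F : (A -> Prop) -> Prop) l :
  (forall X Y, F X -> F Y -> (forall t, X t -> Y t) \/ (forall t, Y t -> X t)) ->
  Forall (fun a => S a \/ exists X, F X /\ X a) l ->
  Forall S l \/ exists X, F X /\ Forall (fun a => S a \/ X a) l.
Proof.
  intros Ftot Hl.
  assert (Hweaken : forall X Y l', (forall t, X t -> Y t) ->
            Forall (fun a => S a \/ X a) l' -> Forall (fun a => S a \/ Y a) l').
  { intros X Y l' XY. apply Forall_impl. intros a [Sa|Xa]; auto. }
  induction Hl as [|a l Ha _ [HS|[X [FX HX]]]]; [left; constructor|..].
  - destruct Ha as [Sa|[Y [FY Ya]]]; [left; constructor; assumption|].
    right. exists Y. split; [exact FY|]. constructor; [auto|].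
    eapply Forall_impl; [|exact HS]. auto.
  - destruct Ha as [Sa|[Y [FY Ya]]]; [right; exists X; split; [|constructor]; auto|].
    destruct (Ftot X Y FX FY) as [XY|YX].
    + right. exists Y. split; [exact FY|]. constructor; [auto|]. eapply Hweaken; eauto.
    + right. exists X. split; [exact FX|]. constructor; auto.
Qed.

Lemma FIP_adjoin (M : A -> Prop) a :
  (forall l, Forall M l -> meetl l * a <> 0) -> FIP (fun t => M t \/ t = a).
Proof.
  intros Ha l Hl.
  assert (Hred : exists l', Forall M l' /\ meetl l * a = meetl l' * a).
  { induction Hl as [|x l Hx _ [l' [Hl' Heq]]]; [exists nil; split; auto|].
    destruct Hx as [Mx | ->].
    - exists (x :: l'). split; [constructor; assumption|].
      simpl. rewrite <- !ba_meet_assoc, Heq. reflexivity.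
    - exists l'. split; [exact Hl'|]. simpl.
      rewrite <- Heq, (ba_meet_comm A a (meetl l)), <- ba_meet_assoc, meet_idem.
      reflexivity. }
  destruct Hred as [l' [Hl' Heq]]. intro H0. apply (Ha l' Hl').
  rewrite <- Heq, H0, meet0l. reflexivity.
Qed.

Lemma maximal_FIP_ultrafilter (M : A -> Prop) :
  FIP M -> (forall a, FIP (fun t => M t \/ t = a) -> M a) -> ultrafilter A M.
Proof.
  intros HM Hmax.
  assert (Hadd : forall a, (forall l, Forall M l -> meetl l * a <> 0) -> M a).
  { intros a Ha. apply Hmax, FIP_adjoin, Ha. }
  assert (Hout : forall a, ~ M a -> exists l, Forall M l /\ meetl l * a = 0).
  { intros a Ha. apply NNPP. intro H. apply Ha, Hadd. intros l Hl H0. apply H. eauto. }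
  repeat split.
  - apply Hadd. intros l Hl. rewrite ba_meet1. apply HM, Hl.
  - intro H0. apply (HM (0 :: nil)); [constructor; auto | apply ba_meet1].
  - intros a b Ma Hab. apply Hadd. intros l Hl H0.
    apply (HM (a :: l)); [constructor; assumption|]. simpl.
    rewrite <- Hab, <- ba_meet_assoc, (ba_meet_comm A b), H0, meet0. reflexivity.
  - intros a b Ma Mb. apply Hadd. intros l Hl H0.
    apply (HM (a :: b :: l)); [repeat constructor; assumption|]. simpl.
    rewrite ba_meet_assoc, ba_meet_comm. exact H0.
  - intro a. destruct (classic (M a)) as [Ma|Ma]; [left; exact Ma|].
    destruct (classic (M (a^c))) as [Mac|Mac]; [right; exact Mac|]. exfalso.
    destruct (Hout a Ma) as [l1 [Hl1 E1]]. destruct (Hout _ Mac) as [l2 [Hl2 E2]].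
    apply (HM (l1 ++ l2)); [apply Forall_app; auto|].
    rewrite meetl_app. exact (meet_zero_split a _ _ E1 E2).
Qed.

Lemma ultrafilter_extension (S : A -> Prop) :
  FIP S -> exists u, ultrafilter A u /\ forall a, S a -> u a.
Proof.
  intro HS.
  destruct (zorn_subsets A (fun X => FIP (fun a => S a \/ X a))) as [M0 [HM0 M0max]].
  { intros F FP Ftot l Hl.
    destruct (chain_list_bound S F l Ftot Hl) as [HSl|[X [FX HX]]].
    - apply HS, HSl.
    - apply (FP X FX l HX). }
  exists (fun a => S a \/ M0 a). split; [|auto].
  apply maximal_FIP_ultrafilter; [exact HM0|].
  intros a Ha. right. apply (M0max (fun t => M0 t \/ t = a)); [auto| |auto].
  refine (FIP_sub _ _ _ Ha). tauto.
Qed.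

Definition subalgebra (B : A -> Prop) : Prop :=
  B 0 /\ B 1 /\ (forall b, B b -> B (b^c)) /\
  (forall b c, B b -> B c -> B (b + c)) /\ (forall b c, B b -> B c -> B (b * c)).

Lemma gen_sub_subalgebra (S : A -> Prop) : subalgebra (gen_sub A S).
Proof.
  repeat split; intros; constructor; assumption.
Qed.

(* An element outside a subalgebra [B] is separated by two ultrafilters
   which agree on [B]: take [x] containing [e] and every complement of an
   element of [B] below [e], then [y] containing [e^c] and [B] inside [x]. *)
Lemma separate_from_subalgebra (B : A -> Prop) (e : A) :
  subalgebra B -> ~ B e ->
  exists x y, ultrafilter A x /\ ultrafilter A y /\ x e /\ ~ y e /\
    forall b, B b -> (x b <-> y b).
Proof.
  intros [B0 [B1 [Bc [Bj Bm]]]] Be.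
  set (Dx := fun d => exists b, B b /\ b <= e /\ d = b^c).
  destruct (ultrafilter_extension (fun a => a = e \/ Dx a)) as [x [Ux Sx]].
  { intros l Hl H0.
    destruct (meetl_lower_bound e Dx l) as [d [[b [Bb [Hbe ->]]] Hd]]; auto.
    - exists 0. split; [exact B0|]. split; [apply meet0l | symmetry; apply compl0].
    - intros d1 d2 [b1 [Bb1 [Hb1 ->]]] [b2 [Bb2 [Hb2 ->]]].
      exists (b1 + b2). split; [auto|]. split; [apply le_join; assumption|].
      symmetry; apply de_morgan.
    - rewrite H0 in Hd. apply Be.
      rewrite (le_antisym e b); [exact Bb | apply le_of_meet_compl, le0, Hd | exact Hbe]. }
  set (Dy := fun d => B d /\ x d).
  destruct (ultrafilter_extension (fun a => a = e^c \/ Dy a)) as [y [Uy Sy]].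
  { intros l Hl H0.
    destruct (meetl_lower_bound (e^c) Dy l) as [d [[Bd Xd] Hd]]; auto.
    - split; [exact B1 | apply Ux].
    - intros d1 d2 [Bd1 Xd1] [Bd2 Xd2]. split; [auto | apply Ux; assumption].
    - rewrite H0 in Hd. apply le0 in Hd. rewrite ba_meet_comm in Hd.
      apply (ultrafilter_not_compl x d Ux Xd), Sx. right. exists d.
      split; [exact Bd|]. split; [apply le_of_meet_compl; exact Hd | reflexivity]. }
  exists x, y. split; [exact Ux|]. split; [exact Uy|]. split; [|split].
  - apply Sx. left; reflexivity.
  - intro Ye. apply (ultrafilter_not_compl y e Uy Ye), Sy. left; reflexivity.
  - intros b Bb. split.
    + intro Xb. apply Sy. right. split; assumption.
    + intro Yb. apply NNPP. intro Xb.
      destruct Ux as [_ [_ [_ [_ Ux_compl]]]].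
      destruct (Ux_compl b) as [?|Xbc]; [contradiction|].
      apply (ultrafilter_not_compl y b Uy Yb), Sy. right. split; auto.
Qed.

Lemma stone_basic_clopen (a : A) :
  stone_open A (fun v => proj1_sig v a) /\ stone_open A (fun v => ~ proj1_sig v a).
Proof.
  split.
  - intros u ua. exists a. split; [exact ua | auto].
  - intros [u Uu] ua. simpl in ua. exists (a^c). split.
    + destruct (proj2 (proj2 (proj2 (proj2 Uu))) a); simpl; tauto.
    + intros [v Uv] vac va. exact (ultrafilter_not_compl v a Uv va vac).
Qed.

End BooleanAlgebra.

Section Indicator.
Context {T : Type}.

Definition indicator (P : T -> Prop) (t : T) : R :=
  if excluded_middle_informative (P t) then 1 else 0.

Lemma indicator_diff_one (P : T -> Prop) x y :
  P x -> ~ P y -> indicator P x - indicator P y = 1.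
Proof.
  intros Px Py. unfold indicator.
  destruct (excluded_middle_informative (P x)); [|contradiction].
  destruct (excluded_middle_informative (P y)); [contradiction|]. lra.
Qed.

Lemma indicator_diff_zero (P : T -> Prop) x y :
  (P x <-> P y) -> indicator P x - indicator P y = 0.
Proof.
  intro Pxy. unfold indicator.
  destruct (excluded_middle_informative (P x));
  destruct (excluded_middle_informative (P y)); tauto || lra.
Qed.

(* The indicator of a clopen set is locally constant, hence continuous. *)
Lemma indicator_continuous (is_open : (T -> Prop) -> Prop) (P : T -> Prop) :
  is_open P -> is_open (fun t => ~ P t) -> top_continuous is_open (indicator P).
Proof.
  intros OP OnP x eps Heps.
  destruct (classic (P x)) as [Px|Px];
    [exists P | exists (fun t => ~ P t)]; (split; [assumption|]); (split; [assumption|]);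
    intros y Py; rewrite indicator_diff_zero, Rabs_R0 by tauto; exact Heps.
Qed.

End Indicator.

Lemma irr_to_nbiort2 (A : BoolAlg) (X : Type) :
  irr_size A X -> @nbiort2_size (Stone A) (stone_open A) X.
Proof.
  intros [e [e_inj e_irr]].
  assert (Hsep : forall i, exists p : Stone A * Stone A,
     proj1_sig (fst p) (e i) /\ ~ proj1_sig (snd p) (e i) /\
     forall j, i <> j -> (proj1_sig (fst p) (e j) <-> proj1_sig (snd p) (e j))).
  { intro i.
    destruct (separate_from_subalgebra A
                (gen_sub A (fun a => (exists k, e k = a) /\ a <> e i)) (e i))
      as [x [y [Ux [Uy [xe [ye Hxy]]]]]].
    - apply gen_sub_subalgebra.
    - apply e_irr. exists i; reflexivity.
    - exists (exist _ x Ux, exist _ y Uy). simpl.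
      split; [exact xe|]. split; [exact ye|].
      intros j Hij. apply Hxy, gen_in. split; [exists j; reflexivity|].
      intro E. apply Hij, e_inj. symmetry. exact E. }
  destruct (choice _ Hsep) as [p Hp].
  exists (fun i => indicator (fun v : Stone A => proj1_sig v (e i))),
         (fun i => fst (p i)), (fun i => snd (p i)).
  split; [|split].
  - intro i. apply indicator_continuous; apply stone_basic_clopen.
  - intro i. destruct (Hp i) as [Hx [Hy _]]. apply indicator_diff_one; assumption.
  - intros i j Hij. destruct (Hp j) as [_ [_ Hagree]].
    apply indicator_diff_zero, Hagree. auto.
Qed.

Section NiceBiorthogonal.
Context {K : Type} (is_open : (K -> Prop) -> Prop) (I : Type)
  (f : I -> K -> R) (x y : I -> K).
Hypothesis Hnice : nice_biorth is_open I f x y.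

Lemma nice_biorth_pairs_injective i j : (x i, y i) = (x j, y j) -> i = j.
Proof.
  destruct Hnice as [_ [Hone Hzero]]. intro E. injection E as Ex Ey.
  apply NNPP; intro Hij. specialize (Hzero i j Hij).
  rewrite <- Ex, <- Ey, Hone in Hzero. lra.
Qed.

(* Where [f_i] is within 1/2 of [f_i (x_i)] and of [f_i (y_i)] respectively,
   [f_i (x_j) - f_i (y_j)] is positive, so [j = i]. *)
Lemma nice_biorth_pairs_discrete :
  discrete_sq is_open (fun p => exists i, (x i, y i) = p).
Proof.
  destruct Hnice as [Hcont [Hone Hzero]].
  intros q [i <-]. simpl.
  destruct (Hcont i (x i) (/2) ltac:(lra)) as [U [OU [Ux HU]]].
  destruct (Hcont i (y i) (/2) ltac:(lra)) as [V [OV [Vy HV]]].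
  exists U, V. repeat split; try assumption.
  intros q [j <-] Uxj Vyj. simpl in Uxj, Vyj.
  destruct (classic (i = j)) as [<-|Hij]; [reflexivity|]. exfalso.
  specialize (Hzero i j Hij). specialize (Hone i).
  apply HU, Rabs_def2 in Uxj. apply HV, Rabs_def2 in Vyj. lra.
Qed.

End NiceBiorthogonal.

Lemma nbiort2_to_s_sq (K : Type) (is_open : (K -> Prop) -> Prop) (X : Type) :
  nbiort2_size is_open X -> s_sq_size is_open X.
Proof.
  intros [f [x [y Hnice]]]. exists (fun i => (x i, y i)). split.
  - exact (nice_biorth_pairs_injective is_open X f x y Hnice).
  - exact (nice_biorth_pairs_discrete is_open X f x y Hnice).
Qed.

Theorem mainTheorem15 :
  (forall A : BoolAlg, infinite_type A ->
     sup_le (irr_size A) (@nbiort2_size (Stone A) (stone_open A))) /\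
  (forall (K : Type) (is_open : (K -> Prop) -> Prop),
     is_topology is_open -> top_compact is_open -> top_hausdorff is_open ->
     infinite_type K ->
     sup_le (nbiort2_size is_open) (s_sq_size is_open)).
Proof.
  split.
  - intros A _. apply sup_le_of_transfer, irr_to_nbiort2.
  - intros K is_open _ _ _ _. apply sup_le_of_transfer, nbiort2_to_s_sq.
Qed.
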